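(* Let $\mathbb{L}$ be a complete orthomodular lattice and let $f:\mathcal{D}(\mathbb{L})\to\mathbb{R}$ be an abstract observable function. Then there is a unique spectral family $E:\mathbb{R}\to\mathbb{L}$ such that $f(\mathcal{J})=\inf\{\lambda\in\mathbb{R} : E_\lambda\in\mathcal{J}\}$ for all $\mathcal{J}\in\mathcal{D}(\mathbb{L})$.
   Context: A complete orthomodular lattice is a complete lattice $\mathbb{L}$ with zero $0$ and unit $1$ and an orthocomplementation $a\mapsto a^\perp$ (involutive, order-reversing, $a\wedge a^\perp=0$, $a\vee a^\perp=1$) such that $a\le b$ implies $b=a\vee(b\wedge a^\perp)$. A dual ideal of $\mathbb{L}$ is a nonempty $\mathcal{J}\subseteq\mathbb{L}$ with $0\notin\mathcal{J}$, $a,b\in\mathcal{J}\Rightarrow a\wedge b\in\mathcal{J}$, and $a\in\mathcal{J},a\le b\Rightarrow b\in\mathcal{J}$; $\mathcal{D}(\mathbb{L})$ is the set of dual ideals, topologized by the basis $\mathcal{D}_a(\mathbb{L}):=\{\mathcal{J}: a\in\mathcal{J}\}$. An abstract observable function is $f:\mathcal{D}(\mathbb{L})\to\mathbb{R}$ that is upper semicontinuous (for all $\mathcal{J}_0$, $\varepsilon>0$ there is $a\in\mathcal{J}_0$ with $f(\mathcal{J})<f(\mathcal{J}_0)+\varepsilon$ for all $\mathcal{J}\in\mathcal{D}_a(\mathbb{L})$) and satisfies $f(\bigcap_{j}\mathcal{J}_j)=\sup_j f(\mathcal{J}_j)$ for every nonempty family of dual ideals. A spectral family in $\mathbb{L}$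 is a map $E:\mathbb{R}\to\mathbb{L}$ with $E_\lambda\le E_\mu$ for $\lambda\le\mu$, $E_\lambda=\bigwedge_{\mu>\lambda}E_\mu$ for all $\lambda$, $\bigwedge_\lambda E_\lambda=0$ and $\bigvee_\lambda E_\lambda=1$. *)

From Stdlib Require Import Reals.
Open Scope R_scope.

Record COML := {
  car :> Type;
  le : car -> car -> Prop;
  le_refl : forall a, le a a;
  le_trans : forall a b c, le a b -> le b c -> le a c;
  le_antisym : forall a b, le a b -> le b a -> a = b;
  sup : (car -> Prop) -> car;
  sup_ub : forall (S : car -> Prop) a, S a -> le a (sup S);
  sup_least : forall (S : car -> Prop) b, (forall a, S a -> le a b) -> le (sup S) b;
  inf : (car -> Prop) -> car;
  inf_lb : forall (S : car -> Prop) a, S a -> le (inf S) a;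
  inf_greatest : forall (S : car -> Prop) b, (forall a, S a -> le b a) -> le b (inf S);
  orth : car -> car;
  orth_invol : forall a, orth (orth a) = a;
  orth_antitone : forall a b, le a b -> le (orth b) (orth a);
  orth_meet : forall a, inf (fun x => x = a \/ x = orth a) = sup (fun _ => False);
  orth_join : forall a, sup (fun x => x = a \/ x = orth a) = inf (fun _ => False);
  orthomodular : forall a b, le a b ->
    b = sup (fun x => x = a \/ x = inf (fun y => y = b \/ y = orth a))
}.

Arguments le {L} a b : rename.
Arguments sup {L} S : rename.
Arguments inf {L} S : rename.
Arguments orth {L} a : rename.

Definition zero {L : COML} : L := sup (fun _ => False).
Definition one {L : COML} : L := inf (fun _ => False).
Definition meet {L : COML} (a b : L) : L := inf (fun x => x = a \/ x = b).
Definition join {L : COML} (a b : L) : L := sup (fun x => x = a \/ x = b).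

Definition dual_ideal {L : COML} (J : L -> Prop) : Prop :=
  (exists a, J a) /\ ~ J zero /\
  (forall a b, J a -> J b -> J (meet a b)) /\
  (forall a b, J a -> le a b -> J b).

Definition DL (L : COML) : Type := { J : L -> Prop | dual_ideal J }.

Definition Da {L : COML} (a : L) (J : DL L) : Prop := proj1_sig J a.

Definition upper_semicontinuous {L : COML} (f : DL L -> R) : Prop :=
  forall (J0 : DL L) (eps : R), 0 < eps ->
    exists a, proj1_sig J0 a /\
      forall J : DL L, Da a J -> f J < f J0 + eps.

Definition preserves_intersections {L : COML} (f : DL L -> R) : Prop :=
  forall (I : Type) (Js : I -> DL L) (K : DL L),
    inhabited I ->
    (forall a, proj1_sig K a <-> (forall i, proj1_sig (Js i) a)) ->
    is_lub (fun r => exists i, r = f (Js i)) (f K).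

Definition abstract_observable_function {L : COML} (f : DL L -> R) : Prop :=
  upper_semicontinuous f /\ preserves_intersections f.

Definition spectral_family {L : COML} (E : R -> L) : Prop :=
  (forall l m, l <= m -> le (E l) (E m)) /\
  (forall l, E l = inf (fun x => exists m, l < m /\ x = E m)) /\
  inf (fun x => exists l, x = E l) = zero /\
  sup (fun x => exists l, x = E l) = one.

Definition is_glb (S : R -> Prop) (x : R) : Prop :=
  (forall y, S y -> x <= y) /\ (forall z, (forall y, S y -> z <= y) -> z <= x).

(* With H_a the principal dual ideal of a nonzero a, the spectral family of f
   is characterised by  a <= E_l  <->  f(H_a) <= l.  Such an E exists: since
   H_(sup S) is the intersection of the H_a for a in S, preservation of
   intersections gives f(H_(sup S)) <= l whenever f(H_a) <= l on S, so
   E_l := sup {a | f(H_a) <= l} works.  The characterisation forces the axioms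
   of a spectral family, and together with upper semicontinuity it is
   equivalent to f(J) = inf {l | E_l in J}; being an adjunction, it determines
   E uniquely. *)

From Stdlib Require Import Reals Lra Classical FunctionalExtensionality.
Open Scope R_scope.

Section DualIdeals.

Variable L : COML.

Lemma zero_le (a : L) : le zero a.
Proof. now apply sup_least. Qed.

Lemma le_one (a : L) : le a one.
Proof. now apply inf_greatest. Qed.

Lemma dual_ideal_neq0 (J : DL L) (a : L) : proj1_sig J a -> a <> zero.
Proof.
  intros Ja ->. destruct (proj2_sig J) as [_ [J0 _]]. contradiction.
Qed.

Lemma dual_ideal_up (J : DL L) (a b : L) : proj1_sig J a -> le a b -> proj1_sig J b.
Proof. destruct (proj2_sig J) as [_ [_ [_ up]]]. apply up. Qed.

Lemma dual_ideal_principal (a : L) : a <> zero -> dual_ideal (fun b => le a b).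
Proof.
  intros a0. repeat split.
  - exists a. apply le_refl.
  - intro a_le0. apply a0, le_antisym; [exact a_le0 | apply zero_le].
  - intros b c ab ac. apply inf_greatest. now intros x [-> | ->].
  - intros b c ab bc. eapply le_trans; eassumption.
Qed.

Definition principal (a : L) (a0 : a <> zero) : DL L :=
  exist _ (fun b => le a b) (dual_ideal_principal a a0).

Lemma sup_neq0 (S : L -> Prop) : sup S <> zero -> exists a, S a /\ a <> zero.
Proof.
  intro S0. apply NNPP. intro none. apply S0, le_antisym; [| apply zero_le].
  apply sup_least. intros a Sa.
  destruct (classic (a = zero)) as [-> | a0]; [apply le_refl |].
  exfalso. apply none. now exists a.
Qed.

End DualIdeals.

Arguments principal {L} a a0.

Section Observable.

Variable L : COML.
Variable f : DL L -> R.
Hypothesis f_meet : preserves_intersections f.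

Lemma observable_antitone (J1 J2 : DL L) :
  (forall a, proj1_sig J1 a -> proj1_sig J2 a) -> f J2 <= f J1.
Proof.
  intros sub.
  destruct (f_meet bool (fun b => if b then J1 else J2) J1 (inhabits true))
    as [ub _].
  - intro a. split; [intros Ja []; auto | intros all; exact (all true)].
  - apply ub. now exists false.
Qed.

Lemma observable_le_principal (J : DL L) (a : L) (Ja : proj1_sig J a) :
  f J <= f (principal a (dual_ideal_neq0 L J a Ja)).
Proof.
  apply observable_antitone. intros b ab. exact (dual_ideal_up L J a b Ja ab).
Qed.

(* The intersection of the H_a, a in S, is H_(sup S). *)
Lemma observable_principal_sup (S : L -> Prop) (S0 : sup S <> zero) (l : R) :
  (forall a (a0 : a <> zero), S a -> f (principal a a0) <= l) ->
  f (principal (sup S) S0) <= l.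
Proof.
  intros bound.
  set (I := {a : L | S a /\ a <> zero}).
  assert (inhI : inhabited I).
  { destruct (sup_neq0 L S S0) as [a Sa]. exact (inhabits (exist _ a Sa)). }
  destruct (f_meet I (fun i => principal (proj1_sig i) (proj2 (proj2_sig i)))
              (principal (sup S) S0) inhI) as [_ least].
  - intro b. simpl. split.
    + intros Sb [a [Sa a0]]. simpl. eapply le_trans; [apply sup_ub, Sa | exact Sb].
    + intros all. apply sup_least. intros a Sa.
      destruct (classic (a = zero)) as [-> | a0]; [apply zero_le |].
      exact (all (exist _ a (conj Sa a0))).
  - apply least. intros r [[a [Sa a0]] ->]. now apply bound.
Qed.

Definition spectral_adjoint (E : R -> L) : Prop :=
  forall l (a : L) (a0 : a <> zero), le a (E l) <-> f (principal a a0) <= l.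

Lemma spectral_adjoint_le (E : R -> L) (a : L) (l : R) :
  spectral_adjoint E -> (forall a0 : a <> zero, f (principal a a0) <= l) ->
  le a (E l).
Proof.
  intros adj bound. destruct (classic (a = zero)) as [-> | a0]; [apply zero_le |].
  now apply (adj l a a0).
Qed.

Lemma spectral_adjoint_bound (E : R -> L) (l : R) (E0 : E l <> zero) :
  spectral_adjoint E -> f (principal (E l) E0) <= l.
Proof. intros adj. apply adj, le_refl. Qed.

Lemma spectral_adjoint_exists :
  spectral_adjoint (fun l => sup (fun a => exists a0 : a <> zero,
                                             f (principal a a0) <= l)).
Proof.
  intros l a a0. split.
  - set (s := sup _). intros a_s.
    assert (s0 : s <> zero).
    { intros s_eq. apply a0, le_antisym; [now rewrite <- s_eq | apply zero_le]. }
    apply Rle_trans with (f (principal s s0)).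
    + apply observable_antitone. intros b sb. eapply le_trans; eassumption.
    + apply observable_principal_sup. intros b b0 [b0' fb].
      now rewrite (proof_irrelevance _ b0 b0').
  - intros fa. apply sup_ub. now exists a0.
Qed.

Lemma spectral_adjoint_unique (E1 E2 : R -> L) :
  spectral_adjoint E1 -> spectral_adjoint E2 -> E1 = E2.
Proof.
  intros adj1 adj2. extensionality l. apply le_antisym.
  - apply (spectral_adjoint_le E2); [exact adj2 |].
    intro E0. exact (spectral_adjoint_bound E1 l E0 adj1).
  - apply (spectral_adjoint_le E1); [exact adj1 |].
    intro E0. exact (spectral_adjoint_bound E2 l E0 adj2).
Qed.

Lemma spectral_adjoint_family (E : R -> L) :
  spectral_adjoint E -> spectral_family E.
Proof.
  intros adj.
  assert (mono : forall l m, l <= m -> le (E l) (E m)).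
  { intros l m lm. apply spectral_adjoint_le; auto. intros E0.
    apply Rle_trans with l; [now apply spectral_adjoint_bound | exact lm]. }
  repeat split; [exact mono | | |].
  - intros l. apply le_antisym.
    + apply inf_greatest. intros x [m [lm ->]]. apply mono. lra.
    + apply spectral_adjoint_le; auto. intros x0.
      set (x := inf _) in *. apply Rnot_lt_le. intros lt.
      (* x lies below E_m for the midpoint m of l and f(H_x), so f(H_x) <= m *)
      set (m := (l + f (principal x x0)) / 2).
      assert (x_le : le x (E m)) by (apply inf_lb; exists m; split; [unfold m; lra | easy]).
      apply (adj m x x0) in x_le. unfold m in x_le. lra.
  - apply le_antisym; [| apply zero_le].
    set (x := inf _). destruct (classic (x = zero)) as [-> | x0]; [apply le_refl |].
    exfalso. set (m := f (principal x x0) - 1).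
    assert (x_le : le x (E m)) by (apply inf_lb; now exists m).
    apply (adj m x x0) in x_le. unfold m in x_le. lra.
  - apply le_antisym; [apply le_one |].
    destruct (classic (@one L = zero)) as [-> | one0]; [apply zero_le |].
    apply le_trans with (E (f (principal one one0))).
    + apply (adj _ one one0), Rle_refl.
    + apply sup_ub. eexists; reflexivity.
Qed.

Lemma spectral_adjoint_glb (E : R -> L) :
  upper_semicontinuous f -> spectral_adjoint E ->
  forall J : DL L, is_glb (fun l => proj1_sig J (E l)) (f J).
Proof.
  intros usc adj J. split.
  - intros l JE. apply Rle_trans with (f (principal (E l) (dual_ideal_neq0 L J _ JE))).
    + apply observable_le_principal.
    + apply spectral_adjoint_bound, adj.
  - intros z lower. apply Rnot_lt_le. intros lt.
    destruct (usc J ((z - f J) / 2)) as [a [Ja near]]; [lra |].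
    set (a0 := dual_ideal_neq0 L J a Ja).
    (* E_m lies in J for m = (f J + z) / 2 because f(H_a) < m *)
    assert (fa := near (principal a a0) (le_refl L a)).
    assert (a_le : le a (E (f J + (z - f J) / 2))) by (apply (adj _ a a0); lra).
    specialize (lower _ (dual_ideal_up L J _ _ Ja a_le)). lra.
Qed.

Lemma glb_spectral_adjoint (E : R -> L) :
  spectral_family E ->
  (forall J : DL L, is_glb (fun l => proj1_sig J (E l)) (f J)) ->
  spectral_adjoint E.
Proof.
  intros [mono [right_cont _]] glb l a a0. split.
  - intros a_le. exact (proj1 (glb (principal a a0)) l a_le).
  - intros fa. rewrite (right_cont l). apply inf_greatest. intros x [m [lm ->]].
    destruct (classic (exists k, k < m /\ le a (E k))) as [[k [km a_le]] | none].
    + eapply le_trans; [exact a_le | apply mono; lra].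
    + exfalso. assert (m <= f (principal a a0)); [| lra].
      apply (proj2 (glb (principal a a0))). intros k a_le.
      apply Rnot_lt_le. intros km. apply none. now exists k.
Qed.

End Observable.

Theorem theorem2p25 (L : COML) (f : DL L -> R) :
  abstract_observable_function f ->
  exists! E : R -> L,
    spectral_family E /\
    forall J : DL L, is_glb (fun l => proj1_sig J (E l)) (f J).
Proof.
  intros [usc f_meet].
  pose proof (spectral_adjoint_exists L f f_meet) as adj.
  eexists. split; [split |].
  - exact (spectral_adjoint_family L f _ adj).
  - exact (spectral_adjoint_glb L f f_meet _ usc adj).
  - intros E' [family glb].
    apply (spectral_adjoint_unique L f); [exact adj |].
    exact (glb_spectral_adjoint L f E' family glb).
Qed.
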